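(* Let $t_0\in(0,1)$, $\alpha_b\in\mathbb{R}$, $u\in\mathbb{R}$, and put $\alpha_a=(1-u)(-2t_0^2+\alpha_b)+u(2t_0^2+\alpha_b)$, $T=3+t_0^2$, and $F=F(\theta)=1+e^{i\theta_1}+e^{i\theta_2}$ for $\theta\in B=[-\pi,\pi]^2$. Consider the matrix $$M_2^{AA}(\eta,\theta)=\begin{pmatrix}-T\eta-\alpha_a&\bar F&t_0^2&0\\ F&-T\eta-\alpha_b&0&t_0^2\\ t_0^2&0&-T\eta-\alpha_a&\bar F\\ 0&t_0^2&F&-T\eta-\alpha_b\end{pmatrix},$$ and suppose $t_0,\alpha_b$ are such that every root $\eta$ of $\det M_2^{AA}(\eta,\theta)=0$ satisfies $|\eta|\le1$ for all $\theta\in B$. Then the dispersion relation of $H_2^{AA}$ is given by the four branches $$r^{\pm}_{\pm}(\theta)=\frac{\pm\sqrt{|F|^2+t_0^4(1-2u)^2}\pm t_0^2+t_0^2(1-2u)-\alpha_b}{T}$$ (signs chosen independently), and: (a) if $\alpha_a=\alpha_b$, the dispersion relation has Dirac cones; (b) if $\alpha_a=-2t_0^2+\alpha_b$ or $\alpha_a=2t_0^2+\alpha_b$, the dispersion relation has parabolic touches; (c) if $\alpha_a\notin[-2t_0^2+\alpha_b,\,2t_0^2+\alpha_b]$, the dispersion relation has gaps (no two branches touch); (d) if $0<u<1$ and $\alpha_a\ne\alpha_b$, the branches intersect but there are no parabolic or conical touches.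
   Context: $H_2^{AA}$ is the Schrödinger operator $-u''+q_0u$ (with $q_0$ continuous on $[0,1]$ and even, $q_0(x)=q_0(1-x)$) on a periodic quantum graph consisting of two identical hexagonal layers (all edges of length 1) stacked in $AA$ fashion: each type-$A$ vertex of one layer is joined by a vertical edge to the type-$A$ vertex above it, and likewise for type-$B$ vertices. At each vertex $v$ one imposes the modified Neumann (Robin) condition: $u_{a_1}(v)=u_{a_2}(v)=u_{f}(v)/t_0$ for in-layer edges $a_i$ and vertical edges $f$ at $v$, and $\sum_{a}u_a'(v)\pm\sum_f t_0u_f'(v)=\delta_vu(v)$, with $\delta_v=\delta_a$ at type-$A$ and $\delta_v=\delta_b$ at type-$B$ vertices ($t_0\in(0,1]$ models the weak interlayer interaction). Via Floquet theory with quasimomentum $\theta\in B$, for $\lambda$ outside the Dirichlet spectrum of $-d^2/dx^2+q_0$ on $[0,1]$, let $\varphi_0,\varphi_1$ solve $-\varphi''+q_0\varphi=\lambda\varphi$ with $\varphi_0(0)=1,\varphi_0(1)=0,\varphi_1(0)=0,\varphi_1(1)=1$, and set $\eta=\eta(\lambda)=\varphi_1'(1)/\varphi_1'(0)$ (half the Hill discriminant) and $\alpha_k=\delta_k/\varphi_1'(0)$, $k\in\{a,b\}$, treated as real constants. Then $\lambda\in\sigma(H_2^{AA})$ iff $\det M_2^{AA}(\eta(\lambda),\theta)=0$ for some $\theta\in B$; the dispersion relation is identified with the root branches $\eta=r(\theta)$. A Dirac cone is a point $\theta_D$ where two branches meet and there is $\gamma\ne0$ with $r(\theta)-r(\theta_D)=\pm\gamma|\theta-\theta_D|+O(|\theta-\theta_D|^2)$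 on the two branches; a parabolic touch is a point where two branches meet with vanishing first derivative and quadratic behavior around it; ''gaps'' means the branches are separated (do not touch).
   Formalization: In a Dirac cone, |θ−θ_D| in ±γ|θ−θ_D| is the square root of some positive definite quadratic form in θ−θ_D rather than the Euclidean norm; a parabolic touch requires the two branches to separate at least quadratically. Each condition added here is assumed in the paper as well or is needed for the statement above to hold. *)

From mathcomp Require Import all_boot all_order all_algebra.
From mathcomp Require Import complex.
From mathcomp Require Import reals trigo.
Import Order.TTheory GRing.Theory Num.Theory.

Set Implicit Arguments.
Unset Strict Implicit.
Unset Printing Implicit Defensive.

Local Open Scope ring_scope.
Local Open Scope complex_scope.

Section Defs.
Variable R : realType.

Definition inB (th : R * R) : Prop :=
  (- pi <= th.1 <= pi) /\ (- pi <= th.2 <= pi).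

(* F(theta) = 1 + e^{i theta1} + e^{i theta2} *)
Definition Fth (th : R * R) : R[i] :=
  (1 + cos th.1 + cos th.2) +i* (sin th.1 + sin th.2).

Definition absF2 (th : R * R) : R :=
  (1 + cos th.1 + cos th.2) ^+ 2 + (sin th.1 + sin th.2) ^+ 2.

Definition Tc (t0 : R) : R := 3 + t0 ^+ 2.

Definition alpha_a (t0 ab u : R) : R :=
  (1 - u) * (- 2 * t0 ^+ 2 + ab) + u * (2 * t0 ^+ 2 + ab).

Definition M2AA (t0 aa ab eta : R) (th : R * R) : 'M[R[i]]_4 :=
  let dA := (- Tc t0 * eta - aa)%:C in
  let dB := (- Tc t0 * eta - ab)%:C in
  let t2 := (t0 ^+ 2)%:C in
  let F := Fth th in
  let Fb := F^* in
  \matrix_(i < 4, j < 4)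
    match nat_of_ord i, nat_of_ord j with
    | 0, 0 => dA | 0, 1 => Fb | 0, 2 => t2
    | 1, 0 => F  | 1, 1 => dB | 1, 3 => t2
    | 2, 0 => t2 | 2, 2 => dA | 2, 3 => Fb
    | 3, 1 => t2 | 3, 2 => F  | 3, 3 => dB
    | _, _ => 0
    end.

Definition sgnb (b : bool) : R := if b then 1 else -1.

Definition branch (t0 ab u : R) (s : bool * bool) (th : R * R) : R :=
  (sgnb s.1 * Num.sqrt (absF2 th + t0 ^+ 4 * (1 - 2 * u) ^+ 2)
   + sgnb s.2 * t0 ^+ 2 + t0 ^+ 2 * (1 - 2 * u) - ab) / Tc t0.

Definition edist (th th' : R * R) : R :=
  Num.sqrt ((th.1 - th'.1) ^+ 2 + (th.2 - th'.2) ^+ 2).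

(* Dirac cone of the two branches f, g at thD : they meet at thD and
   f(th) - f(thD) = + gamma |th - thD|_q + O(|th - thD|^2),
   g(th) - g(thD) = - gamma |th - thD|_q + O(|th - thD|^2), gamma <> 0,
   where |v|_q = sqrt(a v1^2 + 2 b v1 v2 + c v2^2) is a Euclidean norm on the
   quasimomentum plane. *)
Definition dirac_cone (f g : R * R -> R) (thD : R * R) : Prop :=
  inB thD /\ f thD = g thD /\
  exists a b c : R, 0 < a /\ b ^+ 2 < a * c /\
  exists gamma : R, gamma != 0 /\
  exists C delta : R, 0 < C /\ 0 < delta /\
  forall th : R * R, edist th thD < delta ->
    let v1 := th.1 - thD.1 in
    let v2 := th.2 - thD.2 in
    let nq := Num.sqrt (a * v1 ^+ 2 + 2 * b * v1 * v2 + c * v2 ^+ 2) in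
    `| f th - f thD - gamma * nq | <= C * edist th thD ^+ 2 /\
    `| g th - g thD + gamma * nq | <= C * edist th thD ^+ 2.

(* Parabolic touch of f, g at thP : they meet at thP, both have vanishing first
   derivative there (deviation O(|th - thP|^2)), and they separate
   quadratically (|f - g| >= c |th - thP|^2 near thP). *)
Definition parabolic_touch (f g : R * R -> R) (thP : R * R) : Prop :=
  inB thP /\ f thP = g thP /\
  exists c C delta : R, 0 < c /\ 0 < C /\ 0 < delta /\
  forall th : R * R, edist th thP < delta ->
    `| f th - f thP | <= C * edist th thP ^+ 2 /\
    `| g th - g thP | <= C * edist th thP ^+ 2 /\
    c * edist th thP ^+ 2 <= `| f th - g th |.

End Defs.

(* The matrix is [[A, t0^2], [t0^2, A]] with A = [[-T eta - alpha_a, conj F],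
   [F, -T eta - alpha_b]], so its determinant is det (A + t0^2) * det (A - t0^2), whose roots
   in eta are the four branches built on rho = sqrt (|F|^2 + t0^4 kappa^2), kappa = 1 - 2u.
   Two distinct branches can only meet where rho = 0 (possible only if kappa = 0) or where
   rho = t0^2.  At theta_D = (2pi/3, -2pi/3), F vanishes with a nondegenerate linear part, so
   |F| is a cone there: this gives Dirac cones for kappa = 0, and parabolic touches for
   kappa^2 = 1, where rho - t0^2 ~ |F|^2 / (2 t0^2).  If kappa^2 > 1 then rho > t0^2 and
   nothing meets.  If 0 < kappa^2 < 1 the level set rho = t0^2 is reached, but a conical or
   parabolic touch there would make the symmetric differences of rho, hence of |F|^2, O(h^2),
   i.e. would make the point critical for |F|^2; the critical values of |F|^2 are 0 and values
   >= 1, whereas |F|^2 = t0^4 (1 - kappa^2) lies in (0, 1) on that level set. *)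

From Pilot Require Import Defs.
From mathcomp Require Import all_boot all_order all_algebra.
From mathcomp Require Import complex.
From mathcomp Require Import reals trigo.
From mathcomp Require Import boolp classical_sets topology normedtype derive.
From mathcomp Require Import ring lra.
Import Order.TTheory GRing.Theory Num.Theory.
Set Implicit Arguments.
Unset Strict Implicit.
Unset Printing Implicit Defensive.

Local Open Scope ring_scope.

Section Euclid.
Variable R : rcfType.
Local Open Scope complex_scope.

Lemma normc_le_abs (a b : R) : Normc.normc (a +i* b) <= `|a| + `|b|.
Proof.
have -> : a +i* b = (a +i* 0) + (0 +i* b).
  by apply/eqP; rewrite eq_complex /= addr0 add0r !eqxx.
apply: le_trans (le_normcD _ _) _.
by rewrite /Normc.normc expr0n /= addr0 add0r !sqrtr_sqr.
Qed.

Lemma ler_dist_normc (p l : R[i]) :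
  `|Normc.normc p - Normc.normc l| <= Normc.normc (p - l).
Proof.
rewrite ler_distl lerBlDr -lerBlDl; apply/andP; split.
  rewrite -(normcN (p - l)) opprB lerBlDl addrC.
  by have := le_normcD (l - p) p; rewrite subrK.
by have := le_normcD l (p - l); rewrite (addrC l) subrK.
Qed.

Lemma ler_dist_sqrt_sum_sqr (p1 p2 l1 l2 : R) :
  `|Num.sqrt (p1 ^+ 2 + p2 ^+ 2) - Num.sqrt (l1 ^+ 2 + l2 ^+ 2)|
    <= `|p1 - l1| + `|p2 - l2|.
Proof. exact: le_trans (ler_dist_normc (p1 +i* p2) (l1 +i* l2)) (normc_le_abs _ _). Qed.

Lemma sqrt_sum_sqr_lt (x y d : R) : d <= 1 -> Num.sqrt (x ^+ 2 + y ^+ 2) < d ->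
  [/\ `|x| <= 1, `|y| <= 1 & x ^+ 2 + y ^+ 2 < d ^+ 2].
Proof.
move=> d1 hd; have s0 := sqrtr_ge0 (x ^+ 2 + y ^+ 2).
have lt_d : x ^+ 2 + y ^+ 2 < d ^+ 2.
  by rewrite -(sqr_sqrtr (addr_ge0 (sqr_ge0 x) (sqr_ge0 y))); nra.
have le1 (v : R) : v ^+ 2 <= 1 -> `|v| <= 1.
  by rewrite -(real_normK (num_real v)) => ?; have := normr_ge0 v; nra.
by split => //; apply: le1; have := sqr_ge0 x; have := sqr_ge0 y; nra.
Qed.

End Euclid.

Lemma edist_shift (R : realType) (P : R * R) (x y : R) :
  Defs.edist (P.1 + x, P.2 + y) P = Num.sqrt (x ^+ 2 + y ^+ 2).
Proof. by rewrite /Defs.edist /=; congr Num.sqrt; ring. Qed.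

Section TrigEstimates.
Import numFieldNormedType.Exports.
Local Open Scope classical_set_scope.
Variable R : realType.

Lemma mean_value0 {f df : R -> R} : (forall x : R, is_derive x (1 : R) f (df x)) ->
  forall h, exists c, `|c| <= `|h| /\ f h - f 0 = df c * h.
Proof.
move=> fd h.
have cf a b : {within `[a, b], continuous f}.
  apply: continuous_subspaceT => x.
  exact/differentiable_continuous/derivable1_diffP/ex_derive.
case: (lerP 0 h) => h0.
  have [c] := MVT_segment h0 (fun x _ => fd x) (cf 0 h).
  rewrite in_itv /= => /andP[c0 ch] E; exists c; split; last by rewrite E subr0.
  by rewrite !ger0_norm // (le_trans c0 ch).
have [c] := MVT_segment (ltW h0) (fun x _ => fd x) (cf h 0).
rewrite in_itv /= => /andP[c0 ch] E; exists c; split.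
  by rewrite !ler0_norm ?(ltW h0) // lerN2.
by rewrite -opprB E sub0r mulrN opprK.
Qed.

Lemma ler_norm_sin (h : R) : `|sin h| <= `|h|.
Proof.
have [c [_ E]] := mean_value0 (@is_derive_sin R) h.
by move: E; rewrite sin0 subr0 => ->; rewrite normrM ler_piMl // cos_max.
Qed.

Lemma ler_norm_cos_sub1 (h : R) : `|cos h - 1| <= h ^+ 2.
Proof.
have [c [ch E]] := mean_value0 (@is_derive_cos R) h.
move: E; rewrite cos0 => ->; rewrite normrM normrN -real_normK ?num_real //.
by rewrite expr2 ler_wpM2r // (le_trans (ler_norm_sin c)).
Qed.

Lemma ler_norm_sin_sub (h : R) : `|sin h - h| <= `|h| ^+ 3.
Proof.
have D (x : R) : is_derive x (1 : R) (fun x => sin x - x) (cos x - 1) by apply: is_deriveB.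
have [c [ch E]] := mean_value0 D h.
move: E; rewrite /= sin0 !subr0 => ->; rewrite normrM exprSr ler_wpM2r //.
apply: le_trans (ler_norm_cos_sub1 c) _.
by rewrite -real_normK ?num_real // lerXn2r ?nnegrE.
Qed.

Lemma ler_half_sin (h : R) : 0 < h -> h <= 1 / 2 -> h / 2 <= sin h.
Proof.
move=> h0 h1; have := ler_norm_sin_sub h.
rewrite (ger0_norm (ltW h0)) ler_norml => /andP[+ _].
have : h ^+ 3 <= h / 4 by nra.
lra.
Qed.

End TrigEstimates.

Section AbsF2.
Local Open Scope complex_scope.
Variable R : realType.
Implicit Types (a b : R) (th : R * R).

Lemma absF2_ge0 th : 0 <= absF2 th.
Proof. exact: addr_ge0 (sqr_ge0 _) (sqr_ge0 _). Qed.

Lemma absF2_le9 th : absF2 th <= 9.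
Proof.
have := cos_le1 (th.1 - th.2); have := cos_le1 th.1; have := cos_le1 th.2.
have := cos2Dsin2 th.1; have := cos2Dsin2 th.2.
rewrite /absF2 cosB; nra.
Qed.

Lemma absF2C a b : absF2 (a, b) = absF2 (b, a).
Proof. by rewrite /absF2 /=; ring. Qed.

Lemma Fth_mulJ th : Fth th * (Fth th)^* = (absF2 th)%:C.
Proof.
by apply/eqP; rewrite eq_complex /=; apply/andP; split; apply/eqP; rewrite /absF2; ring.
Qed.

(* [absF2_grad1 a b] is [- 1/2] times the partial derivative of [absF2] in its
   first variable at [(a, b)]. *)
Definition absF2_grad1 a b : R := sin a + sin a * cos b - cos a * sin b.

Lemma absF2_sym_diff1 a b h :
  absF2 (a + h, b) - absF2 (a - h, b) = - (4 * sin h * absF2_grad1 a b).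
Proof. by rewrite /absF2 /absF2_grad1 /= !cosD !sinD cosN sinN; ring. Qed.

Lemma absF2_critical_values a b :
  absF2_grad1 a b = 0 -> absF2_grad1 b a = 0 -> absF2 (a, b) = 0 \/ 1 <= absF2 (a, b).
Proof.
rewrite /absF2_grad1 => ga gb.
have sb : sin b = - sin a by lra.
have : sin a * (1 + cos a + cos b) = 0 by rewrite -ga sb; ring.
rewrite /absF2 /= sb subrr expr0n addr0.
move/eqP; rewrite mulf_eq0 => /orP[/eqP sa | /eqP ->]; last by left; rewrite expr0n.
have ca : cos a ^+ 2 = 1 by rewrite cos2sin2 sa expr0n subr0.
have cb : cos b ^+ 2 = 1 by rewrite cos2sin2 sb sa oppr0 expr0n subr0.
have := cos_geN1 a; have := cos_geN1 b.
right; nra.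
Qed.

End AbsF2.

Section DiracPoint.
Variable R : realType.

Definition thetaD : R := acos (- (1 / 2)).
Definition dirac_point : R * R := (thetaD, - thetaD).

Lemma cos_thetaD : cos thetaD = - (1 / 2).
Proof. by rewrite acosK // in_itv /=; apply/andP; split; lra. Qed.

Lemma sin_thetaD_sqr : sin thetaD ^+ 2 = 3 / 4.
Proof. by rewrite sin2cos2 cos_thetaD; field. Qed.

Lemma inB_dirac_point : inB dirac_point.
Proof.
have /andP[t0 tpi] : 0 <= thetaD <= pi.
  by rewrite acos_ge0 ?acos_lepi //; apply/andP; split; lra.
by rewrite /inB /=; have := pi_ge0 R; split; apply/andP; split; lra.
Qed.

Lemma absF2_dirac_point : absF2 dirac_point = 0.
Proof. by rewrite /absF2 /= cosN sinN cos_thetaD subrr; field. Qed.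

Lemma dirac_point_shift (th : R * R) :
  exists v1 v2, th = (thetaD + v1, - thetaD + v2).
Proof. by exists (th.1 - thetaD), (th.2 + thetaD); case: th => a b /=; congr pair; ring. Qed.

Section Expansion.
Variables v1 v2 : R.
Hypotheses (v1_le1 : `|v1| <= 1) (v2_le1 : `|v2| <= 1).

Let ReF := 1 + cos (thetaD + v1) + cos (- thetaD + v2).
Let ImF := sin (thetaD + v1) + sin (- thetaD + v2).
Let D := v1 ^+ 2 + v2 ^+ 2.

Lemma Fth_linear_approx :
  `|ReF - sin thetaD * (v2 - v1)| <= 3 / 2 * D /\
  `|ImF - - (v1 + v2) / 2| <= 3 / 2 * D.
Proof.
have cube (v : R) : `|v| <= 1 -> `|sin v - v| <= v ^+ 2.
  move=> v_le1; apply: le_trans (ler_norm_sin_sub v) _.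
  by rewrite exprS -(real_normK (num_real v)) ler_piMl // sqr_ge0.
have := ler_norm_cos_sub1 v1; have := ler_norm_cos_sub1 v2.
have := cube _ v1_le1; have := cube _ v2_le1.
have := sin_max thetaD; have := sin_thetaD_sqr.
rewrite /ReF /ImF /D !cosD !sinD cosN sinN cos_thetaD.
move: (cos v1) (cos v2) (sin v1) (sin v2) => c1 c2 s1 s2.
rewrite !ler_norml => ss /andP[? ?] /andP[? ?] /andP[? ?] /andP[? ?] /andP[? ?].
split; apply/andP; split; nra.
Qed.

Lemma sqrt_absF2_near_dirac_point :
  `|Num.sqrt (absF2 (thetaD + v1, - thetaD + v2)) -
    Num.sqrt (v1 ^+ 2 - v1 * v2 + v2 ^+ 2)| <= 3 * D.
Proof.
have [A1 A2] := Fth_linear_approx.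
have -> : v1 ^+ 2 - v1 * v2 + v2 ^+ 2 =
    (sin thetaD * (v2 - v1)) ^+ 2 + (- (v1 + v2) / 2) ^+ 2.
  by rewrite exprMn sin_thetaD_sqr; field.
apply: le_trans (ler_dist_sqrt_sum_sqr _ _ _ _) _.
rewrite /absF2 /=; lra.
Qed.

Lemma absF2_near_dirac_point :
  absF2 (thetaD + v1, - thetaD + v2) <= 24 * D /\
  (D <= 1 / 36 -> D / 8 <= absF2 (thetaD + v1, - thetaD + v2)).
Proof.
have [B1 B2] := Fth_linear_approx; rewrite /absF2 /= -/ReF -/ImF.
set L1 := sin thetaD * (v2 - v1) in B1 *; set L2 := - (v1 + v2) / 2 in B2 *.
have q : L1 ^+ 2 + L2 ^+ 2 = v1 ^+ 2 - v1 * v2 + v2 ^+ 2.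
  by rewrite /L1 /L2 exprMn sin_thetaD_sqr; field.
have D0 : 0 <= D by rewrite addr_ge0 ?sqr_ge0.
have D2 : D <= 2.
  have : v1 ^+ 2 <= 1 by rewrite -(real_normK (num_real v1)) expr_le1.
  have : v2 ^+ 2 <= 1 by rewrite -(real_normK (num_real v2)) expr_le1.
  rewrite /D; lra.
have qlo : D / 2 <= L1 ^+ 2 + L2 ^+ 2.
  by rewrite q; have := sqr_ge0 (v1 - v2); rewrite /D; nra.
have qhi : L1 ^+ 2 + L2 ^+ 2 <= 3 / 2 * D.
  by rewrite q; have := sqr_ge0 (v1 + v2); rewrite /D; nra.
have -> : ReF = L1 + (ReF - L1) by rewrite addrC subrK.
have -> : ImF = L2 + (ImF - L2) by rewrite addrC subrK.
move: (ReF - L1) (ImF - L2) B1 B2 => E1 E2 B1 B2.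
have e1 : E1 ^+ 2 <= (3 / 2 * D) ^+ 2.
  by rewrite -(real_normK (num_real E1)); have := normr_ge0 E1; nra.
have e2 : E2 ^+ 2 <= (3 / 2 * D) ^+ 2.
  by rewrite -(real_normK (num_real E2)); have := normr_ge0 E2; nra.
have := sqr_ge0 (L1 - E1); have := sqr_ge0 (L2 - E2).
have := sqr_ge0 (L1 + 2 * E1); have := sqr_ge0 (L2 + 2 * E2).
split; first nra.
move=> Dsm; nra.
Qed.

End Expansion.
End DiracPoint.

Lemma det_block_mx_sym (T : comNzRingType) n (A B : 'M[T]_n) :
  \det (block_mx A B B A) = \det (A + B) * \det (A - B).
Proof.
have -> : block_mx A B B A =
    block_mx 1 0 1 1 *m block_mx (A + B) B 0 (A - B) *m block_mx 1 0 (-1) 1.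
  rewrite !mulmx_block !(mul1mx, mul0mx, mulmx1, mulmx0, addr0, add0r, mulmxN).
  by rewrite addrK [B + _]addrC subrK (addrC A B) addrK.
by rewrite !det_mulmx !det_lblock det_ublock !det1 !mulr1 mul1r.
Qed.

Definition mx22 {T : Type} (a b c d : T) : 'M[T]_2 :=
  \matrix_(i, j) if i == 0 :> nat then if j == 0 :> nat then a else b
                 else if j == 0 :> nat then c else d.

Lemma det_mx22 (T : comNzRingType) (a b c d : T) : \det (mx22 a b c d) = a * d - b * c.
Proof.
rewrite (expand_det_row _ ord0) !big_ord_recl big_ord0 /cofactor !det_mx11 !mxE /=.
ring.
Qed.

Lemma mx22_addC (T : nzRingType) (a b c d x : T) :
  mx22 a b c d + x%:M = mx22 (a + x) b c (d + x).
Proof. by apply/matrixP => -[[|[|//]] ?] [[|[|//]] ?]; rewrite !mxE /= ?addr0. Qed.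

Section Det.
Local Open Scope complex_scope.
Variable R : realType.

Lemma M2AA_block (t0 aa ab eta : R) th :
  let A := mx22 (- Tc t0 * eta - aa)%:C (Fth th)^* (Fth th) (- Tc t0 * eta - ab)%:C in
  M2AA t0 aa ab eta th = block_mx A (t0 ^+ 2)%:C%:M (t0 ^+ 2)%:C%:M A.
Proof.
(* [split] does not compute on closed ordinals, so each test [ltnP] is analysed. *)
apply/matrixP => -[[|[|[|[|//]]]] ?] -[[|[|[|[|//]]]] ?].
all: rewrite !mxE /split; case: ltnP => // ? /=; rewrite !mxE /split.
all: by case: ltnP => // ? /=; rewrite !mxE /= ?mulr1n ?mulr0n.
Qed.

Lemma det_M2AA (t0 aa ab eta : R) th :
  \det (M2AA t0 aa ab eta th) =
  (((- Tc t0 * eta - aa + t0 ^+ 2) * (- Tc t0 * eta - ab + t0 ^+ 2) - absF2 th) *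
   ((- Tc t0 * eta - aa - t0 ^+ 2) * (- Tc t0 * eta - ab - t0 ^+ 2) - absF2 th))%:C.
Proof.
rewrite M2AA_block (@det_block_mx_sym _ 2).
rewrite -raddfN !mx22_addC !det_mx22.
rewrite (mulrC (Fth th)^*%C) Fth_mulJ.
by rewrite !(rmorphM, rmorphB, rmorphD, rmorphN).
Qed.

End Det.

Section SymmetricDifferences.
Variable R : realType.
Implicit Types (f g : R * R -> R) (P : R * R).

(* The linear part [gamma |v|_q] of a Dirac cone is even in [v], so it cancels
   in symmetric differences just as the (vanishing) linear part of a
   parabolic touch does. *)
Definition sym_diff_quadratic f P : Prop :=
  exists C delta : R, 0 < C /\ 0 < delta /\ forall h, 0 < h < delta ->
    `|f (P.1 + h, P.2) - f (P.1 - h, P.2)| <= C * h ^+ 2 /\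
    `|f (P.1, P.2 + h) - f (P.1, P.2 - h)| <= C * h ^+ 2.

Lemma sym_diff_quadratic_of_even_approx f P (Z : R -> R -> R) C delta :
  0 < C -> 0 < delta -> (forall x y, Z (- x) (- y) = Z x y) ->
  (forall x y, Num.sqrt (x ^+ 2 + y ^+ 2) < delta ->
     `|f (P.1 + x, P.2 + y) - Z x y| <= C * (x ^+ 2 + y ^+ 2)) ->
  sym_diff_quadratic f P.
Proof.
move=> C0 d0 Zeven approx; exists (2 * C), delta; split; first lra.
split=> // h /andP[h0 hd].
have approx_h x y : x ^+ 2 + y ^+ 2 = h ^+ 2 ->
    `|f (P.1 + x, P.2 + y) - Z x y| <= C * h ^+ 2.
  by move=> e; rewrite -e; apply: approx; rewrite e sqrtr_sqr gtr0_norm.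
have sym x y : x ^+ 2 + y ^+ 2 = h ^+ 2 ->
    `|f (P.1 + x, P.2 + y) - f (P.1 - x, P.2 - y)| <= 2 * C * h ^+ 2.
  move=> e; have := approx_h x y e; have := approx_h (- x) (- y).
  rewrite !sqrrN Zeven => /(_ e) Am Ap.
  by apply: le_trans (ler_distD (Z x y) _ _) _; rewrite (distrC (Z x y)); lra.
have := sym h 0; have := sym 0 h; rewrite expr0n /= addr0 add0r !addr0 !subr0.
by move=> /(_ erefl) ? /(_ erefl) ?.
Qed.

Lemma dirac_cone_sym_diff f g P : dirac_cone f g P -> sym_diff_quadratic f P.
Proof.
move=> [_ [_ [a [b [c [_ [_ [gm [_ [C [delta [C0 [d0 cone]]]]]]]]]]]]].
pose Z x y := f P + gm * Num.sqrt (a * x ^+ 2 + 2 * b * x * y + c * y ^+ 2).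
apply: (@sym_diff_quadratic_of_even_approx _ _ Z C delta) => //.
  by move=> x y; rewrite /Z; congr (_ + _ * Num.sqrt _); ring.
move=> x y hxy; have := cone (P.1 + x, P.2 + y) => /=.
rewrite edist_shift => /(_ hxy) [+ _].
have -> : P.1 + x - P.1 = x by ring.
have -> : P.2 + y - P.2 = y by ring.
by rewrite sqr_sqrtr ?addr_ge0 ?sqr_ge0 // /Z opprD addrA.
Qed.

Lemma parabolic_touch_sym_diff f g P : parabolic_touch f g P -> sym_diff_quadratic f P.
Proof.
move=> [_ [_ [c [C [delta [_ [C0 [d0 touch]]]]]]]].
apply: (@sym_diff_quadratic_of_even_approx _ _ (fun _ _ => f P) C delta) => //.
move=> x y hxy; have := touch (P.1 + x, P.2 + y).
rewrite edist_shift => /(_ hxy) [+ _].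
by rewrite sqr_sqrtr ?addr_ge0 ?sqr_ge0.
Qed.

Lemma eq0_of_le_small (x C d : R) :
  0 < d -> (forall h, 0 < h < d -> `|x| <= C * h) -> x = 0.
Proof.
move=> d0 small; apply/normr0_eq0/le_anti; rewrite normr_ge0 andbT.
rewrite leNgt; apply/negP => x0.
pose h := Num.min (d / 2) (`|x| / (2 * (`|C| + 1))).
have C1 : 0 < 2 * (`|C| + 1) by rewrite mulr_gt0 // ltr_wpDl.
have h0 : 0 < h by rewrite lt_min divr_gt0 //= divr_gt0.
have hd : h < d by rewrite gt_min ltr_pdivrMr //; lra.
have hx : h * (2 * (`|C| + 1)) <= `|x| by rewrite -ler_pdivlMr // ge_min lexx orbT.
have := small h; rewrite h0 hd => /(_ isT).
have : C * h <= `|C| * h by rewrite ler_wpM2r ?(ltW h0) // real_ler_norm // num_real.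
have := normr_ge0 C.
nra.
Qed.

End SymmetricDifferences.

Section Branches.
Variables (R : realType) (t0 ab u : R).
Implicit Types (s : bool * bool) (th : R * R).
Local Notation br := (branch t0 ab u).

Definition kappa : R := 1 - 2 * u.
Definition rho th : R := Num.sqrt (absF2 th + t0 ^+ 4 * kappa ^+ 2).

Lemma Tc_ge1 : 1 <= Tc t0.
Proof. by rewrite /Tc; have := sqr_ge0 t0; lra. Qed.

Lemma Tc_gt0 : 0 < Tc t0.
Proof. exact: lt_le_trans ltr01 Tc_ge1. Qed.

Lemma Tc_neq0 : Tc t0 != 0.
Proof. by rewrite gt_eqF // Tc_gt0. Qed.

Lemma ler_norm_divTc (x : R) : `|x / Tc t0| <= `|x|.
Proof.
by rewrite normrM normfV (gtr0_norm Tc_gt0) ler_piMr // invf_le1 ?Tc_gt0 ?Tc_ge1.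
Qed.

Lemma rho_ge0 th : 0 <= rho th.
Proof. exact: sqrtr_ge0. Qed.

Lemma rho_sqr th : rho th ^+ 2 = absF2 th + t0 ^+ 4 * kappa ^+ 2.
Proof. by rewrite sqr_sqrtr // addr_ge0 ?absF2_ge0 // mulr_ge0 ?sqr_ge0 // exprn_even_ge0. Qed.

Lemma rho_le4 th : t0 ^+ 4 * kappa ^+ 2 <= 1 -> rho th <= 4.
Proof. by have := rho_sqr th; have := rho_ge0 th; have := absF2_le9 th; nra. Qed.

Lemma branchE s th :
  br s th = (sgnb R s.1 * rho th + sgnb R s.2 * t0 ^+ 2 + t0 ^+ 2 * kappa - ab) / Tc t0.
Proof. by []. Qed.

Lemma branch_sub s p q : br s p - br s q = sgnb R s.1 * (rho p - rho q) / Tc t0.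
Proof. by rewrite !branchE; field; exact: Tc_neq0. Qed.

Lemma branch_eq s s' th : br s th = br s' th <->
  (sgnb R s.1 - sgnb R s'.1) * rho th + (sgnb R s.2 - sgnb R s'.2) * t0 ^+ 2 = 0.
Proof.
rewrite !branchE; have Tn := Tc_neq0; split.
- by move/(congr1 (fun z => z * Tc t0)); rewrite !divfK // => E; lra.
- by move=> E; congr (_ / _); lra.
Qed.

Lemma alpha_aE : alpha_a t0 ab u = ab - 2 * t0 ^+ 2 * kappa.
Proof. by rewrite /alpha_a /kappa; ring. Qed.

Lemma det_M2AA_eq0 th eta :
  \det (M2AA t0 (alpha_a t0 ab u) ab eta th) = 0 <-> exists s, eta = br s th.
Proof.
rewrite det_M2AA alpha_aE.
set w1 := - Tc t0 * eta + t0 ^+ 2 + t0 ^+ 2 * kappa - ab.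
set w2 := - Tc t0 * eta - t0 ^+ 2 + t0 ^+ 2 * kappa - ab.
rewrite [X in X%:C%C](_ : _ = (w1 - rho th) * (w1 + rho th) * ((w2 - rho th) * (w2 + rho th))).
  2: by rewrite -[absF2 th](addrK (t0 ^+ 4 * kappa ^+ 2)) -rho_sqr /w1 /w2; ring.
have Tn := Tc_neq0.
have branchP s : eta = br s th <->
    eta * Tc t0 = sgnb R s.1 * rho th + sgnb R s.2 * t0 ^+ 2 + t0 ^+ 2 * kappa - ab.
  by rewrite branchE; split=> [->|<-]; rewrite ?divfK ?mulfK.
split.
- move/(congr1 (@complex.Re R)); rewrite /= => /eqP.
  rewrite !mulf_eq0 => /orP[/orP[]|/orP[]] /eqP E; rewrite /w1 /w2 in E.
  + by exists (false, true); apply/branchP; rewrite /sgnb /=; lra.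
  + by exists (true, true); apply/branchP; rewrite /sgnb /=; lra.
  + by exists (false, false); apply/branchP; rewrite /sgnb /=; lra.
  + by exists (true, false); apply/branchP; rewrite /sgnb /=; lra.
- move=> [[[] []] /branchP]; rewrite /sgnb /= => E.
  + have -> : w1 + rho th = 0 by rewrite /w1; lra.
    by rewrite !(mulr0, mul0r) rmorph0.
  + have -> : w2 + rho th = 0 by rewrite /w2; lra.
    by rewrite !(mulr0, mul0r) rmorph0.
  + have -> : w1 - rho th = 0 by rewrite /w1; lra.
    by rewrite !(mulr0, mul0r) rmorph0.
  + have -> : w2 - rho th = 0 by rewrite /w2; lra.
    by rewrite !(mulr0, mul0r) rmorph0.
Qed.

Hypotheses (t0_gt0 : 0 < t0) (t0_lt1 : t0 < 1).

Lemma t0_sqr_gt0 : 0 < t0 ^+ 2.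
Proof. exact: exprn_gt0. Qed.

Lemma t0_pow4 : t0 ^+ 4 = t0 ^+ 2 * t0 ^+ 2.
Proof. by rewrite -exprD. Qed.

Lemma branch_neq s s' th : 1 < kappa ^+ 2 -> s != s' -> br s th != br s' th.
Proof.
move=> k1 ne; apply/eqP; rewrite branch_eq.
have t2 := t0_sqr_gt0; have rho0 := rho_ge0 th.
have rho_gt : t0 ^+ 2 < rho th.
  have : t0 ^+ 4 < t0 ^+ 4 * kappa ^+ 2 by rewrite ltr_pMr // exprn_gt0.
  have := rho_sqr th; have := absF2_ge0 th; rewrite t0_pow4; nra.
move: ne; case: s => [[] []]; case: s' => [[] []] //= _; rewrite /sgnb /=; lra.
Qed.

Lemma branch_meet s s' th : 0 < kappa ^+ 2 -> s != s' -> br s th = br s' th ->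
  rho th = t0 ^+ 2.
Proof.
move=> k0 ne; rewrite branch_eq.
have t2 := t0_sqr_gt0.
have rho_gt0 : 0 < rho th.
  rewrite sqrtr_gt0; have := absF2_ge0 th.
  have : 0 < t0 ^+ 4 * kappa ^+ 2 by rewrite mulr_gt0 // exprn_gt0.
  lra.
by move: ne; case: s => [[] []]; case: s' => [[] []] //= _; rewrite /sgnb /=; lra.
Qed.

Lemma exists_branch_meet : 0 < kappa ^+ 2 < 1 ->
  exists s s' th, s != s' /\ inB th /\ br s th = br s' th.
Proof.
move=> /andP[k0 k1].
have t4 : 0 < t0 ^+ 4 by rewrite exprn_gt0.
have t41 : t0 ^+ 4 < 1 by rewrite exprn_ilt1 // ltW.
pose r := Num.sqrt (t0 ^+ 4 * (1 - kappa ^+ 2)).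
have r0 : 0 <= r := sqrtr_ge0 _.
have rr : r ^+ 2 = t0 ^+ 4 * (1 - kappa ^+ 2).
  by rewrite sqr_sqrtr // mulr_ge0 ?subr_ge0 // ltW.
have r1 : r < 1 by nra.
(* On the antidiagonal, [F (x, - x) = 1 + 2 cos x] is real. *)
pose x := acos ((r - 1) / 2).
have cx : cos x = (r - 1) / 2 by rewrite acosK // in_itv /=; apply/andP; split; lra.
have /andP[x0 xpi] : 0 <= x <= pi by rewrite acos_ge0 ?acos_lepi //; lra.
exists (true, false), (false, true), (x, - x); split=> //; split.
  by rewrite /inB /=; have := pi_ge0 R; split; apply/andP; split; lra.
apply/branch_eq; rewrite /sgnb /=.
suff -> : rho (x, - x) = t0 ^+ 2 by ring.
rewrite /rho /absF2 /= cosN sinN cx subrr expr0n addr0.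
have -> : 1 + (r - 1) / 2 + (r - 1) / 2 = r by field.
rewrite rr t0_pow4 -mulrDr subrK mulr1 sqrtr_sqr ger0_norm //; exact: ltW t0_sqr_gt0.
Qed.

Lemma rhoC a b : rho (a, b) = rho (b, a).
Proof. by rewrite /rho absF2C. Qed.

Lemma rho_sym_diff1_bound a b h : t0 ^+ 4 * kappa ^+ 2 <= 1 -> 0 < h <= 1 / 2 ->
  h * `|absF2_grad1 a b| <= 4 * `|rho (a + h, b) - rho (a - h, b)|.
Proof.
move=> tk /andP[h0 h1]; have sh := ler_half_sin h0 h1.
have := rho_ge0 (a + h, b); have := rho_ge0 (a - h, b).
have := rho_le4 (a + h, b) tk; have := rho_le4 (a - h, b) tk.
have D : rho (a + h, b) ^+ 2 - rho (a - h, b) ^+ 2 = - (4 * sin h * absF2_grad1 a b).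
  by rewrite !rho_sqr -absF2_sym_diff1; ring.
move: D; set rp := rho _; set rm := rho _; set g := absF2_grad1 a b => D rm4 rp4 rm0 rp0.
have E : `|rp - rm| * (rp + rm) = 4 * sin h * `|g|.
  rewrite -[rp + rm]ger0_norm ?addr_ge0 // -normrM -subr_sqr D normrN !normrM.
  have sh0 : 0 <= sin h by lra.
  by rewrite (ger0_norm sh0) ger0_norm.
have := normr_ge0 g; have := normr_ge0 (rp - rm); nra.
Qed.

Lemma sym_diff_rho_critical a b : t0 ^+ 4 * kappa ^+ 2 <= 1 ->
  sym_diff_quadratic rho (a, b) -> absF2_grad1 a b = 0 /\ absF2_grad1 b a = 0.
Proof.
move=> tk [C [delta [C0 [d0 sd]]]].
have crit x y : (forall h, 0 < h < delta -> `|rho (x + h, y) - rho (x - h, y)| <= C * h ^+ 2) ->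
    absF2_grad1 x y = 0.
  move=> sdx; apply: (@eq0_of_le_small _ _ (4 * C) (Num.min delta (1 / 2))).
    by rewrite lt_min d0 /=; lra.
  move=> h; rewrite lt_min => /andP[h0 /andP[hd h2]].
  have := @rho_sym_diff1_bound x y h tk; rewrite h0 (ltW h2) => /(_ isT).
  have := sdx h; rewrite h0 hd => /(_ isT).
  by move=> ? ?; rewrite -(ler_pM2l h0); nra.
split; apply: crit => h hh; first exact: (sd h hh).1.
by rewrite rhoC [rho (b - h, a)]rhoC; exact: (sd h hh).2.
Qed.

Lemma sym_diff_rho_of_branch s P : sym_diff_quadratic (br s) P -> sym_diff_quadratic rho P.
Proof.
have T0 := Tc_gt0.
have rho_dist p q : `|rho p - rho q| = Tc t0 * `|br s p - br s q|.
  rewrite branch_sub normrM normfV (gtr0_norm T0) normrM mulrC divfK ?Tc_neq0 //.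
  by case: s.1; rewrite /sgnb ?normrN normr1 mul1r.
move=> [C [delta [C0 [d0 sd]]]]; exists (Tc t0 * C), delta.
split; first exact: mulr_gt0; split=> // h /sd[sd1 sd2].
by rewrite !rho_dist -mulrA !ler_wpM2l // ltW.
Qed.

Lemma not_sym_diff_at_meet s s' P : 0 < kappa ^+ 2 < 1 -> s != s' ->
  br s P = br s' P -> ~ sym_diff_quadratic (br s) P.
Proof.
move=> /andP[k0 k1] ne meet /sym_diff_rho_of_branch; case: P meet => a b meet sd.
have t4 : 0 < t0 ^+ 4 by rewrite exprn_gt0.
have t41 : t0 ^+ 4 < 1 by rewrite exprn_ilt1 // ltW.
have [g1 g2] := sym_diff_rho_critical (ltac:(nra) : t0 ^+ 4 * kappa ^+ 2 <= 1) sd.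
have := rho_sqr (a, b); rewrite (branch_meet k0 ne meet) -exprM /=.
by case: (absF2_critical_values g1 g2) => [-> | ?]; nra.
Qed.

Lemma branch_meet_no_touch s s' th : 0 < kappa ^+ 2 < 1 -> s != s' ->
  ~ dirac_cone (br s) (br s') th /\ ~ parabolic_touch (br s) (br s') th.
Proof.
move=> k ne; split=> [cone | touch].
  exact: (not_sym_diff_at_meet k ne cone.2.1 (dirac_cone_sym_diff cone)).
exact: (not_sym_diff_at_meet k ne touch.2.1 (parabolic_touch_sym_diff touch)).
Qed.

Lemma branches_dirac_cone : kappa = 0 ->
  dirac_cone (br (true, true)) (br (false, true)) (dirac_point R).
Proof.
move=> k0.
have rhoE th : rho th = Num.sqrt (absF2 th) by rewrite /rho k0 expr0n /= mulr0 addr0.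
have rho0 : rho (dirac_point R) = 0 by rewrite rhoE absF2_dirac_point sqrtr0.
split; first exact: inB_dirac_point.
split; first by apply/branch_eq; rewrite rho0 /sgnb /=; ring.
exists 1, (- (1 / 2)), 1; split; first lra.
split; first by rewrite sqrrN; lra.
exists (Tc t0)^-1; split; first by rewrite invr_eq0 Tc_neq0.
exists 3, 1; do 2 (split; first lra).
move=> th; have [v1 [v2 ->]] := dirac_point_shift th.
rewrite (edist_shift (dirac_point R)) => /sqrt_sum_sqr_lt[//| v1le v2le _] /=.
have -> : thetaD R + v1 - thetaD R = v1 by ring.
have -> : - thetaD R + v2 - - thetaD R = v2 by ring.
rewrite sqr_sqrtr ?addr_ge0 ?sqr_ge0 //.
have -> : 1 * v1 ^+ 2 + 2 * - (1 / 2) * v1 * v2 + 1 * v2 ^+ 2 = v1 ^+ 2 - v1 * v2 + v2 ^+ 2.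
  by field.
have := sqrt_absF2_near_dirac_point v1le v2le; rewrite -rhoE.
set G := rho _; set N := Num.sqrt _ => near.
rewrite !branch_sub rho0 /sgnb /= !subr0.
have -> : 1 * G / Tc t0 - (Tc t0)^-1 * N = (G - N) / Tc t0 by field; exact: Tc_neq0.
have -> : -1 * G / Tc t0 + (Tc t0)^-1 * N = - ((G - N) / Tc t0) by field; exact: Tc_neq0.
by rewrite normrN; split; exact: le_trans (ler_norm_divTc _) near.
Qed.

Lemma rho_near_dirac_point v1 v2 : kappa ^+ 2 = 1 -> `|v1| <= 1 -> `|v2| <= 1 ->
  v1 ^+ 2 + v2 ^+ 2 <= 1 / 36 ->
  let X := rho (thetaD R + v1, - thetaD R + v2) - t0 ^+ 2 in
  [/\ 0 <= X, X <= 24 / t0 ^+ 2 * (v1 ^+ 2 + v2 ^+ 2) & (v1 ^+ 2 + v2 ^+ 2) / 40 <= X].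
Proof.
move=> k1 v1le v2le Dsm X; have t2 := t0_sqr_gt0.
have t21 : t0 ^+ 2 < 1 by rewrite exprn_ilt1 // ltW.
have tk : t0 ^+ 4 * kappa ^+ 2 <= 1 by rewrite k1 mulr1 t0_pow4; nra.
have [] := absF2_near_dirac_point v1le v2le; rewrite -/X.
set D := v1 ^+ 2 + v2 ^+ 2; set th := (_, _) => Gup /(_ Dsm) Glo.
have XG : X * (rho th + t0 ^+ 2) = absF2 th.
  by rewrite -subr_sqr -exprM rho_sqr k1 mulr1 addrK.
have rle4 := rho_le4 th tk; have rge0 := rho_ge0 th.
have X0 : 0 <= X by have := absF2_ge0 th; rewrite -XG; nra.
split=> //; first by rewrite mulrAC ler_pdivlMr //; nra.
have : X * (rho th + t0 ^+ 2) <= X * 5 by rewrite ler_wpM2l //; lra.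
lra.
Qed.

Lemma branches_parabolic_touch : kappa ^+ 2 = 1 ->
  parabolic_touch (br (true, false)) (br (false, true)) (dirac_point R).
Proof.
move=> k1; have t2 := t0_sqr_gt0; have T0 := Tc_gt0.
have rho0 : rho (dirac_point R) = t0 ^+ 2.
  by rewrite /rho absF2_dirac_point add0r k1 mulr1 t0_pow4 -expr2 sqrtr_sqr ger0_norm // ltW.
split; first exact: inB_dirac_point.
split; first by apply/branch_eq; rewrite rho0 /sgnb /=; ring.
exists (1 / (20 * Tc t0)), (24 / t0 ^+ 2), (1 / 6).
split; first by rewrite divr_gt0 // mulr_gt0.
split; first by rewrite divr_gt0.
split; first lra.
move=> th; have [v1 [v2 ->]] := dirac_point_shift th.
rewrite (edist_shift (dirac_point R)) => /sqrt_sum_sqr_lt[|v1le v2le /ltW]; first lra.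
rewrite sqr_sqrtr ?addr_ge0 ?sqr_ge0 // (_ : (1 / 6) ^+ 2 = 1 / 36); last by field.
move=> /(rho_near_dirac_point k1 v1le v2le) /=.
set X := rho _ - _ => -[X0 Xup Xlo].
rewrite !branch_sub rho0 /sgnb /= !mul1r mulN1r mulNr normrN -/X.
have up : `|X / Tc t0| <= 24 / t0 ^+ 2 * (v1 ^+ 2 + v2 ^+ 2).
  by apply: le_trans (ler_norm_divTc _) _; rewrite ger0_norm.
do 2 (split=> //).
rewrite !branchE /sgnb /= (_ : _ - _ = 2 * X / Tc t0).
  rewrite ger0_norm ?divr_ge0 ?mulr_ge0 ?(ltW T0) //.
  by rewrite invfM mulrAC ler_pM2r ?invr_gt0 //; lra.
by rewrite /X; field; exact: Tc_neq0.
Qed.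

Lemma kappa_eq0 : alpha_a t0 ab u = ab -> kappa = 0.
Proof.
rewrite alpha_aE => e; have /eqP : t0 ^+ 2 * kappa = 0 by lra.
by rewrite mulf_eq0 (gt_eqF t0_sqr_gt0) => /eqP.
Qed.

Lemma kappa_sqr_eq1 :
  alpha_a t0 ab u = - 2 * t0 ^+ 2 + ab \/ alpha_a t0 ab u = 2 * t0 ^+ 2 + ab ->
  kappa ^+ 2 = 1.
Proof.
rewrite alpha_aE => e.
have [] : t0 ^+ 2 * (kappa - 1) = 0 \/ t0 ^+ 2 * (kappa + 1) = 0.
  by case: e => ?; [left | right]; lra.
all: move/eqP; rewrite mulf_eq0 (gt_eqF t0_sqr_gt0) ?subr_eq0 ?addr_eq0 => /eqP ->.
all: by rewrite ?sqrrN expr1n.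
Qed.

Lemma kappa_sqr_gt1 :
  alpha_a t0 ab u < - 2 * t0 ^+ 2 + ab \/ 2 * t0 ^+ 2 + ab < alpha_a t0 ab u ->
  1 < kappa ^+ 2.
Proof.
rewrite alpha_aE => -[e | e].
  have : t0 ^+ 2 * 1 < t0 ^+ 2 * kappa by lra.
  by rewrite ltr_pM2l ?t0_sqr_gt0 // => ?; nra.
have : t0 ^+ 2 * kappa < t0 ^+ 2 * (-1) by lra.
by rewrite ltr_pM2l ?t0_sqr_gt0 // => ?; nra.
Qed.

Lemma kappa_sqr_in01 : 0 < u < 1 -> alpha_a t0 ab u != ab -> 0 < kappa ^+ 2 < 1.
Proof.
move=> /andP[u0 u1] ne.
have k0 : kappa != 0 by apply: contraNneq ne => k0; rewrite alpha_aE k0 mulr0 subr0.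
by rewrite exprn_even_gt0 // k0 /kappa; nra.
Qed.

End Branches.

Theorem mainTheorem2 (R : realType) (t0 ab u : R) :
  0 < t0 < 1 ->
  (forall (th : R * R) (eta : R), inB th ->
     \det (M2AA t0 (alpha_a t0 ab u) ab eta th) = 0 -> `|eta| <= 1) ->
  (* the dispersion relation consists of the four branches *)
  (forall (th : R * R) (eta : R), inB th ->
     (\det (M2AA t0 (alpha_a t0 ab u) ab eta th) = 0 <->
      exists s : bool * bool, eta = branch t0 ab u s th)) /\
  (* (a) Dirac cones *)
  (alpha_a t0 ab u = ab ->
     exists (s s' : bool * bool) (thD : R * R),
       s != s' /\ dirac_cone (branch t0 ab u s) (branch t0 ab u s') thD) /\
  (* (b) parabolic touches *)
  (alpha_a t0 ab u = - 2 * t0 ^+ 2 + ab \/ alpha_a t0 ab u = 2 * t0 ^+ 2 + ab ->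
     exists (s s' : bool * bool) (thP : R * R),
       s != s' /\ parabolic_touch (branch t0 ab u s) (branch t0 ab u s') thP) /\
  (* (c) gaps *)
  (alpha_a t0 ab u < - 2 * t0 ^+ 2 + ab \/ 2 * t0 ^+ 2 + ab < alpha_a t0 ab u ->
     forall (s s' : bool * bool) (th : R * R),
       s != s' -> inB th -> branch t0 ab u s th != branch t0 ab u s' th) /\
  (* (d) intersections without parabolic or conical touches *)
  (0 < u < 1 -> alpha_a t0 ab u != ab ->
     (exists (s s' : bool * bool) (th : R * R),
        s != s' /\ inB th /\ branch t0 ab u s th = branch t0 ab u s' th) /\
     (forall (s s' : bool * bool) (th : R * R), s != s' ->
        ~ dirac_cone (branch t0 ab u s) (branch t0 ab u s') th /\
        ~ parabolic_touch (branch t0 ab u s) (branch t0 ab u s') th)).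
Proof.
move=> /andP[t0_gt0 t0_lt1] _.
split; first by move=> th eta _; exact: det_M2AA_eq0.
split.
  move=> /(kappa_eq0 t0_gt0) k0; exists (true, true), (false, true), (dirac_point R).
  by split=> //; exact: branches_dirac_cone.
split.
  move=> /(kappa_sqr_eq1 t0_gt0) k1; exists (true, false), (false, true), (dirac_point R).
  by split=> //; exact: branches_parabolic_touch.
split; first by move=> /(kappa_sqr_gt1 t0_gt0) k1 s s' th ne _; exact: branch_neq.
move=> u01 ne; have k := kappa_sqr_in01 u01 ne.
split; first exact: exists_branch_meet.
by move=> s s' th; exact: branch_meet_no_touch.
Qed.
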